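(* Let $n$ be an even positive integer, let $0<\epsilon\le \frac1{18}$, and let $f_\epsilon:\mathbb{R}^n\to\mathbb{R}$ be \[ f_\epsilon(\mathbf{x})=\frac{1-\epsilon}{2}\sum_{i=1}^n x_i^2+\frac{\epsilon}{2}\Big(\sum_{i=1}^n x_i\Big)^2 , \] whose minimum point is $\mathbf{x}^*=\mathbf{0}$. Let $\Gamma\ge 1$. Let $\mathbf{x}^0$ be the point whose even-indexed coordinates equal $+1$ and whose odd-indexed coordinates equal $-1$. Run sequential stochastic coordinate descent for $t$ steps: at each step $s=1,\dots,t$ a coordinate $j\in\{1,\dots,n\}$ is chosen uniformly at random, independently of all previous choices, and one sets $x^s_j=x^{s-1}_j-\frac{1}{\Gamma}\nabla_j f_\epsilon(\mathbf{x}^{s-1})$ and $x^s_k=x^{s-1}_k$ for $k\ne j$. Then \[ \mathbb{E}\big[f_\epsilon(\mathbf{x}^t)-f_\epsilon(\mathbf{x}^* )\big]\ \ge\ \Big(1-\frac{2}{n}\cdot\frac{1-\epsilon}{\Gamma}\Big)^{t}\big(f_\epsilon(\mathbf{x}^0)-f_\epsilon(\mathbf{x}^* )\big). \]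
   Context: Here $\nabla_j f_\epsilon(\mathbf{x})=(1-\epsilon)x_j+\epsilon\sum_{i=1}^n x_i$. The parameter $\Gamma$ is the step-size parameter, required to satisfy $\Gamma\ge L_{\max}$, where $L_{\max}=1$ is the largest coordinate-wise Lipschitz constant of $\nabla_j f_\epsilon$ in $x_j$. *)

(* R : realType. Points of R^n are functions 'I_n -> R
   (coordinate i : 'I_n is the paper's coordinate i+1). *)
From mathcomp Require Import all_boot all_order all_algebra.
From mathcomp Require Import reals.
Set Implicit Arguments. Unset Strict Implicit. Unset Printing Implicit Defensive.
Import Order.TTheory GRing.Theory Num.Theory.
Local Open Scope ring_scope.

Section Defs.
Variables (R : realType) (n : nat).

Definition f_eps (eps : R) (x : 'I_n -> R) : R :=
  (1 - eps) / 2 * (\sum_(i < n) x i ^+ 2) + eps / 2 * (\sum_(i < n) x i) ^+ 2.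

Definition grad_eps (eps : R) (x : 'I_n -> R) (j : 'I_n) : R :=
  (1 - eps) * x j + eps * \sum_(i < n) x i.

Definition cd_step (eps Gamma : R) (x : 'I_n -> R) (j : 'I_n) : 'I_n -> R :=
  fun k => if k == j then x k - Gamma^-1 * grad_eps eps x j else x k.

Definition cd_run (eps Gamma : R) (x0 : 'I_n -> R) (js : seq 'I_n) : 'I_n -> R :=
  foldl (cd_step eps Gamma) x0 js.

(* x^0: paper's coordinate i+1 is +1 if i+1 is even, -1 if odd *)
Definition x_init : 'I_n -> R := fun i => if odd i then 1 else -1.

(* E[f_eps(x^t) - f_eps(0)] for t independent uniform choices in {1..n}:
   the average over all n^t choice sequences. *)
Definition expected_gap (eps Gamma : R) (t : nat) : R :=
  (\sum_(js : t.-tuple 'I_n)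
      (f_eps eps (cd_run eps Gamma x_init js) - f_eps eps (fun _ => 0)))
  / (n%:R ^+ t).

End Defs.

From mathcomp Require Import all_boot all_order all_algebra.
From mathcomp Require Import reals.
From mathcomp Require Import ring lra.
Set Implicit Arguments. Unset Strict Implicit. Unset Printing Implicit Defensive.
Import Order.TTheory GRing.Theory Num.Theory.
Local Open Scope ring_scope.

(* The quantity h(x) = sum_i x_i^2 - (sum_i x_i)^2 is a lower bound for
   f_eps(x) up to the factor (1 - eps)/2, with equality when sum_i x_i = 0,
   as is the case at x^0.  A single coordinate step on j changes h by
   -(2/Gamma) grad_j(x) (x_j - sum_i x_i); averaging over j, the expected
   value of h after a step is at least (1 - 2(1 - eps)/(n Gamma)) h(x), the
   surplus being a nonnegative multiple of eps (sum_i x_i)^2.  Iterating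
   this bound over the t independent uniform choices gives the theorem. *)

Lemma big_tuple_cons (R : Type) (idx : R) (op : Monoid.com_law idx)
    (I : finType) (t : nat) (F : t.+1.-tuple I -> R) :
  \big[op/idx]_(js : t.+1.-tuple I) F js =
  \big[op/idx]_(j : I) \big[op/idx]_(js : t.-tuple I) F [tuple of j :: js].
Proof.
rewrite (reindex (fun p : I * t.-tuple I => [tuple of p.1 :: p.2])) /=.
  by rewrite -(pair_big xpredT xpredT (fun j (js : t.-tuple I) => F [tuple of j :: js])).
exists (fun js => (thead js, [tuple of behead js])) => [[j js] _ | js _] /=.
  by rewrite theadE; congr pair; apply: val_inj.
by rewrite [RHS]tuple_eta.
Qed.

Lemma sum_update (V : zmodType) (I : finType) (j : I) (A B : I -> V) :
  \sum_i (if i == j then A i else B i) = \sum_i B i + (A j - B j).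
Proof.
rewrite (bigD1 j) //= eqxx [in RHS](bigD1 j) //=.
rewrite (eq_bigr B) => [|i /negbTE -> //].
by rewrite addrAC [B j + _]addrC subrK.
Qed.

Section IteratedAverage.
Variables (R : realDomainType) (T : Type) (I : finType).
Variables (step : T -> I -> T) (phi : T -> R) (c : R).
Hypothesis c_ge0 : 0 <= c.
Hypothesis sum_step_ge : forall x, c * phi x <= \sum_j phi (step x j).

Lemma sum_foldl_ge t x :
  c ^+ t * phi x <= \sum_(js : t.-tuple I) phi (foldl step x js).
Proof.
elim: t x => [|t IH] x.
  rewrite (big_pred1 [tuple]) => [|js]; first by rewrite expr0 mul1r.
  by rewrite /= [js]tuple0; apply/eqP.
rewrite big_tuple_cons exprSr -mulrA.
apply: le_trans (ler_wpM2l (exprn_ge0 t c_ge0) (sum_step_ge x)) _.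
by rewrite mulr_sumr; apply: ler_sum => j _; apply: IH.
Qed.

End IteratedAverage.

Section CoordinateDescent.
Variables (R : realType) (n : nat) (eps Gamma : R).
Implicit Types (x : 'I_n -> R) (j : 'I_n).

Definition potential x : R := \sum_i x i ^+ 2 - (\sum_i x i) ^+ 2.

Lemma f_eps_potential x :
  f_eps eps x = (1 - eps) / 2 * potential x + (\sum_i x i) ^+ 2 / 2.
Proof. by rewrite /f_eps /potential; ring. Qed.

Lemma f_eps_ge_potential x : (1 - eps) / 2 * potential x <= f_eps eps x.
Proof. by rewrite f_eps_potential lerDl divr_ge0 ?sqr_ge0. Qed.

Lemma potential_cd_step x j :
  potential (cd_step eps Gamma x j) =
  potential x - 2 / Gamma * grad_eps eps x j * (x j - \sum_i x i).
Proof.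
rewrite /potential /cd_step.
under eq_bigr do rewrite (fun_if (fun y => y ^+ 2)).
by rewrite !sum_update; ring.
Qed.

Lemma sum_potential_cd_step x :
  \sum_j potential (cd_step eps Gamma x j) =
  (n%:R - 2 * (1 - eps) / Gamma) * potential x
    + 2 * eps / Gamma * (n%:R - 1) * (\sum_i x i) ^+ 2.
Proof.
under eq_bigr do rewrite potential_cd_step.
rewrite sumrB sumr_const card_ord /potential.
set S := \sum_i x i; set Q := \sum_i x i ^+ 2.
have -> : \sum_j 2 / Gamma * grad_eps eps x j * (x j - S) =
    \sum_j (2 * (1 - eps) / Gamma * x j ^+ 2
            + 2 * (2 * eps - 1) / Gamma * S * x j - 2 * eps / Gamma * S ^+ 2).
  by apply: eq_bigr => j _; rewrite /grad_eps -/S; ring.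
rewrite sumrB big_split /= -!mulr_sumr sumr_const card_ord -/Q -/S.
by ring.
Qed.

Lemma sum_potential_cd_step_ge x : (0 < n)%N -> 0 <= eps -> 0 <= Gamma ->
  (n%:R - 2 * (1 - eps) / Gamma) * potential x <=
  \sum_j potential (cd_step eps Gamma x j).
Proof.
move=> n_gt0 eps_ge0 Gamma_ge0; rewrite sum_potential_cd_step lerDl.
by rewrite mulr_ge0 ?sqr_ge0 // !mulr_ge0 ?invr_ge0 ?subr_ge0 ?ler1n.
Qed.

End CoordinateDescent.

Lemma sum_alternating (R : pzRingType) (m : nat) : ~~ odd m ->
  \sum_(i < m) (if odd i then 1 else -1 : R) = 0.
Proof.
move=> m_even; rewrite -[m]odd_double_half (negbTE m_even) add0n.
elim: m./2 => [|k IH]; first by rewrite big_ord0.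
by rewrite doubleS !big_ord_recr /= IH odd_double /= add0r addNr.
Qed.

Section InitialPoint.
Variables (R : realType) (n : nat) (eps : R).
Hypothesis n_even : ~~ odd n.

Lemma sum_x_init : \sum_i @x_init R n i = 0.
Proof. exact: sum_alternating. Qed.

Lemma potential_x_init : potential (@x_init R n) = n%:R.
Proof.
rewrite /potential sum_x_init expr0n subr0 (eq_bigr (fun=> 1)).
  by rewrite sumr_const card_ord.
by move=> i _; rewrite /x_init; case: odd; rewrite ?sqrrN expr1n.
Qed.

Lemma f_eps_x_init : f_eps eps (@x_init R n) = (1 - eps) / 2 * n%:R.
Proof.
by rewrite f_eps_potential potential_x_init sum_x_init expr0n mul0r addr0.
Qed.

End InitialPoint.

Lemma f_eps0 (R : realType) (n : nat) (eps : R) :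
  f_eps eps (fun _ : 'I_n => 0) = 0.
Proof. by rewrite /f_eps !big1 ?expr0n ?mulr0 ?addr0 // => i _; rewrite expr0n. Qed.

Theorem theorem2 (R : realType) (n : nat) (eps Gamma : R) (t : nat)
  (hn_pos : (0 < n)%N) (hn_even : ~~ odd n)
  (heps0 : 0 < eps) (heps1 : eps <= 1 / 18) (hGamma : 1 <= Gamma) :
  expected_gap n eps Gamma t >=
    (1 - 2 / n%:R * ((1 - eps) / Gamma)) ^+ t *
      (f_eps eps (@x_init R n) - f_eps eps (fun _ : 'I_n => 0)).
Proof.
have Gamma_gt0 : 0 < Gamma by lra.
have n_ge2 : 2 <= n%:R :> R.
  by rewrite (ler_nat R 2); case: n hn_pos hn_even => [|[|k]].
set c := n%:R - 2 * (1 - eps) / Gamma.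
have c_ge0 : 0 <= c by rewrite subr_ge0 (le_trans _ n_ge2) // ler_pdivrMr //; lra.
have c_scale : (1 - 2 / n%:R * ((1 - eps) / Gamma)) * n%:R = c.
  by rewrite /c; field; rewrite pnatr_eq0 -lt0n hn_pos gt_eqF.
have run_ge := sum_foldl_ge c_ge0 (fun x =>
  sum_potential_cd_step_ge x hn_pos (ltW heps0) (ltW Gamma_gt0)) t (@x_init R n).
rewrite /expected_gap f_eps0 subr0 ler_pdivlMr ?exprn_gt0 ?ltr0n //.
under eq_bigr do rewrite subr0.
rewrite f_eps_x_init // mulrAC -exprMn c_scale mulrCA.
rewrite -[X in c ^+ t * X](potential_x_init R hn_even).
apply: le_trans (ler_wpM2l _ run_ge) _; first by rewrite divr_ge0 //; lra.
by rewrite mulr_sumr; apply: ler_sum => js _; apply: f_eps_ge_potential.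
Qed.
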